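(* Let $\mathcal{A}$ be an idempotent complete additive category. (1) Let $l\ge2$. Then $\mathcal{A}$ is $l$-uniformly regular coherent if and only if for every morphism $f_1\colon A_1\to A_0$ there is a sequence $0\to A_l\xrightarrow{f_l}A_{l-1}\xrightarrow{f_{l-1}}\cdots\xrightarrow{f_2}A_1\xrightarrow{f_1}A_0$ in $\mathcal{A}$ which is exact at $A_i$ for $i=1,2,\ldots,l$. (2) $\mathcal{A}$ is $1$-uniformly regular coherent if and only if every morphism $f\colon A_1\to A_0$ factors as $A_1\xrightarrow{f_1}B\xrightarrow{f_0}A_0$ with $f_1$ surjective and $f_0$ injective. (3) The following are equivalent: (a) $\mathcal{A}$ is $0$-uniformly regular coherent; (b) for every morphism $f_1\colon A_1\to A_0$ there is a morphism $f_0\colon A_0\to A_{-1}$ such that $A_1\xrightarrow{f_1}A_0\xrightarrow{f_0}A_{-1}\to0$ is exact (at $A_0$ and at $A_{-1}$); (c) for every morphism $f\colon A_1\to A_0$ there is a morphism $g\colon A_0\to A_1$ with $f\circ g\circ f=f$. (4) $\mathcal{A}$ is regular coherent if and only if for every morphism $f_1\colon A_1\to A_0$ there is a sequence of finite length $0\to A_n\xrightarrow{f_n}A_{n-1}\to\cdots\xrightarrow{f_2}A_1\xrightarrow{f_1}A_0$ in $\mathcal{A}$ which is exact at $A_i$ for $i=1,\ldots,n$.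
   Context: $\mathcal{A}$ is idempotent complete if every idempotent $p\colon A\to A$ splits (there is an isomorphism $A\cong B\oplus C$ under which $p$ becomes $\mathrm{id}_B\oplus0$). A $\mathbb{Z}\mathcal{A}$-module is an additive contravariant functor $\mathcal{A}\to$ abelian groups; finitely presented means the cokernel of a morphism between finite direct sums of representables $\mathrm{mor}_{\mathcal{A}}(?,A)$. $\mathcal{A}$ is regular coherent if every finitely presented $\mathbb{Z}\mathcal{A}$-module $M$ has an exact sequence $0\to P_n\to\cdots\to P_0\to M\to0$ of finite length with $P_i$ finitely generated projective, and $l$-uniformly regular coherent if this can always be achieved with $n=l$. A sequence $A_0\xrightarrow{f_0}A_1\xrightarrow{f_1}A_2$ in $\mathcal{A}$ is exact at $A_1$ if $f_1\circ f_0=0$ and for every object $A$ and $g\colon A\to A_1$ with $f_1\circ g=0$ there is $\bar g\colon A\to A_0$ with $f_0\circ\bar g=g$ (sequences ending in $0$, such as $A\to 0$ or $0\to A$, are read with zero maps). A morphism $f\colon A\to B$ is called surjective if for every object $C$ the map $\mathrm{mor}_{\mathcal{A}}(C,A)\to\mathrm{mor}_{\mathcal{A}}(C,B)$, $h\mapsto f\circ h$, is surjective, and injective if all these maps are injective (i.e. the induced morphism of representable $\mathbb{Z}\mathcal{A}$-modules is an epimorphism, resp. monomorphism). *)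

From HB Require Import structures.
From mathcomp Require Import all_boot all_order all_algebra.
Set Implicit Arguments.
Unset Strict Implicit.
Unset Printing Implicit Defensive.
Import GRing.Theory.
Local Open Scope ring_scope.

Record AddCat := {
  Obj : Type;
  cHom : Obj -> Obj -> zmodType;
  ccomp : forall A B D : Obj, cHom B D -> cHom A B -> cHom A D;
  idm : forall A : Obj, cHom A A;
  compA : forall A B D E (h : cHom D E) (g : cHom B D) (f : cHom A B),
      ccomp h (ccomp g f) = ccomp (ccomp h g) f;
  comp1l : forall A B (f : cHom A B), ccomp (idm B) f = f;
  comp1r : forall A B (f : cHom A B), ccomp f (idm A) = f;
  compDl : forall A B D (g1 g2 : cHom B D) (f : cHom A B),
      ccomp (g1 + g2) f = ccomp g1 f + ccomp g2 f;
  compDr : forall A B D (g : cHom B D) (f1 f2 : cHom A B),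
      ccomp g (f1 + f2) = ccomp g f1 + ccomp g f2;
  zero_obj : exists Z : Obj, forall A : Obj,
      (forall f g : cHom A Z, f = g) /\ (forall f g : cHom Z A, f = g);
  biprod : forall A B : Obj, exists (D : Obj) (i1 : cHom A D) (i2 : cHom B D)
      (p1 : cHom D A) (p2 : cHom D B),
      [/\ ccomp p1 i1 = idm A, ccomp p2 i2 = idm B, ccomp p1 i2 = 0,
          ccomp p2 i1 = 0 & ccomp i1 p1 + ccomp i2 p2 = idm D]
}.
Arguments cHom {_}.
Arguments ccomp {_ A B D}.
Arguments idm {_}.

Section Defs.
Variable C : AddCat.

Definition idem_complete : Prop :=
  forall (A : Obj C) (p : cHom A A), ccomp p p = p ->
  exists (B D : Obj C) (i1 : cHom B A) (i2 : cHom D A) (p1 : cHom A B) (p2 : cHom A D),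
    [/\ ccomp p1 i1 = idm B, ccomp p2 i2 = idm D, ccomp p1 i2 = 0,
        ccomp p2 i1 = 0 & ccomp i1 p1 + ccomp i2 p2 = idm A /\ p = ccomp i1 p1].

Definition cexact {X Y Z : Obj C} (f : cHom X Y) (g : cHom Y Z) : Prop :=
  ccomp g f = 0 /\
  forall (B : Obj C) (h : cHom B Y), ccomp g h = 0 -> exists hb : cHom B X, ccomp f hb = h.

Definition cexact_zero_left {Y Z : Obj C} (f : cHom Y Z) : Prop :=
  forall (B : Obj C) (h : cHom B Y), ccomp f h = 0 -> h = 0.

Definition csurj {X Y : Obj C} (f : cHom X Y) : Prop :=
  forall (B : Obj C) (h : cHom B Y), exists h' : cHom B X, ccomp f h' = h.

Definition cinj {X Y : Obj C} (f : cHom X Y) : Prop :=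
  forall (B : Obj C) (h h' : cHom B X), ccomp f h = ccomp f h' -> h = h'.

(* objects A_0, A_1, A_2 = Y 0, A_3 = Y 1, ... *)
Definition ext_obj (A0 A1 : Obj C) (Y : nat -> Obj C) (i : nat) : Obj C :=
  match i with 0 => A0 | 1 => A1 | k.+2 => Y k end.

(* 0 -> X n -d(n-1)-> ... -d 1-> X 1 -d 0-> X 0, exact at X i for 1 <= i <= n
   (d i plays the role of the paper's f_(i+1)) *)
Definition chain_exact (X : nat -> Obj C) (d : forall i, cHom (X i.+1) (X i))
  (n : nat) : Prop :=
  (forall i, (i.+1 < n)%N -> cexact (d i.+1) (d i)) /\
  (forall k, n = k.+1 -> cexact_zero_left (d k)).

(* ---------- Z A-modules (additive contravariant functors to Ab) ---------- *)
Record Mod := {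
  mob :> Obj C -> zmodType;
  mmap : forall A B : Obj C, cHom A B -> mob B -> mob A;
  mmapDf : forall A B (f g : cHom A B) (x : mob B), mmap (f + g) x = mmap f x + mmap g x;
  mmapDx : forall A B (f : cHom A B) (x y : mob B), mmap f (x + y) = mmap f x + mmap f y;
  mmap1 : forall A (x : mob A), mmap (idm A) x = x;
  mmapM : forall A B D (f : cHom A B) (g : cHom B D) (x : mob D),
      mmap (ccomp g f) x = mmap f (mmap g x)
}.
Arguments mmap _ {A B}.

Record Mor (M N : Mod) := {
  nt :> forall A : Obj C, M A -> N A;
  ntD : forall A (x y : M A), @nt A (x + y) = @nt A x + @nt A y;
  ntN : forall A B (f : cHom A B) (x : M B), @nt A (mmap M f x) = mmap N f (@nt B x)
}.
Arguments nt {M N} _ A _.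

Definition Rep (B : Obj C) : Mod.
Proof.
refine (@Build_Mod (fun A => cHom A B) (fun A A' f g => ccomp g f) _ _ _ _).
- by move=> A A' f g x; rewrite compDr.
- by move=> A A' f x y; rewrite compDl.
- by move=> A x; rewrite comp1r.
- by move=> A A' D f g x; rewrite compA.
Defined.

Definition msurj {M N : Mod} (t : Mor M N) : Prop :=
  forall A (y : N A), exists x : M A, t A x = y.
Definition minj {M N : Mod} (t : Mor M N) : Prop :=
  forall A (x : M A), t A x = 0 -> x = 0.
Definition mexact {M N K : Mod} (t : Mor M N) (s : Mor N K) : Prop :=
  (forall A (x : M A), s A (t A x) = 0) /\
  (forall A (y : N A), s A y = 0 -> exists x : M A, t A x = y).

(* F is a finite direct sum of representables mor(?,A_1) (+) ... (+) mor(?,A_n),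
   expressed by the biproduct equations in the category of modules *)
Definition fin_free (F : Mod) : Prop :=
  exists (n : nat) (A : 'I_n -> Obj C) (i : forall k, Mor (Rep (A k)) F)
         (p : forall k, Mor F (Rep (A k))),
    [/\ (forall k B (x : Rep (A k) B), p k B (i k B x) = x),
        (forall k k', k != k' -> forall B (x : Rep (A k') B), p k B (i k' B x) = 0) &
        (forall B (x : F B), \sum_(k < n) i k B (p k B x) = x)].

Definition fg_proj (P : Mod) : Prop :=
  exists (F : Mod) (i : Mor P F) (r : Mor F P),
    fin_free F /\ forall B (x : P B), r B (i B x) = x.

Definition fin_pres (M : Mod) : Prop :=
  exists (F1 F0 : Mod) (t : Mor F1 F0) (s : Mor F0 M),
    [/\ fin_free F1, fin_free F0, mexact t s & msurj s].

Definition has_resolution (M : Mod) (n : nat) : Prop :=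
  exists (P : nat -> Mod) (d : forall i, Mor (P i.+1) (P i)) (e : Mor (P 0) M),
    [/\ (forall i, (i <= n)%N -> fg_proj (P i)),
        msurj e,
        ((0 < n)%N -> mexact (d 0) e),
        (forall i, (i.+1 < n)%N -> mexact (d i.+1) (d i)) &
        (if n is k.+1 then minj (d k) else minj e)].

Definition reg_coherent : Prop :=
  forall M : Mod, fin_pres M -> exists n : nat, has_resolution M n.

Definition unif_reg_coherent (l : nat) : Prop :=
  forall M : Mod, fin_pres M -> has_resolution M l.

End Defs.

(* By Yoneda, the finitely generated projective ZA-modules are exactly the
   representable ones: finite direct sums of representables are represented
   by biproducts, and their summands by splitting idempotents. A finitely
   presented module M is the cokernel of some Rep f, and two steps of
   dimension shifting turn a resolution of M of length l >= 2 by
   representables into an exact sequence of length l in A ending in f, and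
   back. For l = 1 a single shift leaves a monomorphism onto the image of f,
   i.e. an epi-mono factorisation of f; for l = 0, M itself is representable,
   which amounts to the splitting of the idempotent 1 - f g for some g with
   f g f = f. *)

From Pilot Require Import Defs.
From HB Require Import structures.
From mathcomp Require Import all_boot all_order all_algebra.
From Stdlib Require Import ClassicalEpsilon PropExtensionality FunctionalExtensionality.
Set Implicit Arguments.
Unset Strict Implicit.
Unset Printing Implicit Defensive.
Import GRing.Theory.
Local Open Scope ring_scope.

Local Notation ccompA := Defs.compA.

Section AdditiveMaps.
Variables (U V : zmodType) (f : U -> V).
Hypothesis fD : {morph f : x y / x + y}.

Lemma morph_add0 : f 0 = 0.
Proof. by apply: (addrI (f 0)); rewrite -fD !addr0. Qed.

Lemma morph_addN x : f (- x) = - f x.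
Proof. by apply: (addrI (f x)); rewrite -fD !subrr morph_add0. Qed.

Lemma morph_addB x y : f (x - y) = f x - f y.
Proof. by rewrite fD morph_addN. Qed.
End AdditiveMaps.

Section AddCatTheory.
Variable C : AddCat.
Implicit Types A B D X Y : Obj C.

Lemma comp0r A B D (g : cHom B D) : ccomp g (0 : cHom A B) = 0.
Proof. apply: morph_add0; exact: compDr. Qed.

Lemma comp0l A B D (f : cHom A B) : ccomp (0 : cHom B D) f = 0.
Proof. exact: (morph_add0 (f := ccomp^~ f) (fun g1 g2 => compDl g1 g2 f)). Qed.

Lemma compNr A B D (g : cHom B D) (f : cHom A B) : ccomp g (- f) = - ccomp g f.
Proof. apply: morph_addN; exact: compDr. Qed.

Lemma compBr A B D (g : cHom B D) (f1 f2 : cHom A B) :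
  ccomp g (f1 - f2) = ccomp g f1 - ccomp g f2.
Proof. apply: morph_addB; exact: compDr. Qed.

Lemma compBl A B D (g1 g2 : cHom B D) (f : cHom A B) :
  ccomp (g1 - g2) f = ccomp g1 f - ccomp g2 f.
Proof. exact: (morph_addB (f := ccomp^~ f) (fun g1 g2 => compDl g1 g2 f)). Qed.

Lemma zero_obj_hom_eq Z :
  (forall A, (forall f g : cHom A Z, f = g) /\ (forall f g : cHom Z A, f = g)) ->
  forall X (f g : cHom X Z), f = g.
Proof. by move=> HZ X; case: (HZ X). Qed.

Variable M : Mod C.

Lemma mmap0f A B (x : M B) : mmap (0 : cHom A B) x = 0.
Proof. exact: (morph_add0 (f := fun g => mmap g x) (fun f g => mmapDf f g x)). Qed.

Lemma mmapf0 A B (f : cHom A B) : mmap f (0 : M B) = 0.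
Proof. exact: morph_add0 (mmapDx f). Qed.

Lemma mmapNf A B (f : cHom A B) (x : M B) : mmap (- f) x = - mmap f x.
Proof. exact: (morph_addN (f := fun g => mmap g x) (fun f g => mmapDf f g x)). Qed.

Lemma mmapBf A B (f g : cHom A B) (x : M B) : mmap (f - g) x = mmap f x - mmap g x.
Proof. exact: (morph_addB (f := fun g => mmap g x) (fun f g => mmapDf f g x)). Qed.

Variables (N : Mod C) (t : Mor M N).

Lemma mor0 A : t A 0 = 0.
Proof. apply: morph_add0; exact: ntD. Qed.

Lemma mor_sum A n (F : 'I_n -> M A) : t A (\sum_(k < n) F k) = \sum_(k < n) t A (F k).
Proof. exact: (big_morph (t A) (ntD t (A := A)) (mor0 A)). Qed.
End AddCatTheory.

Section Yoneda.
Variable C : AddCat.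

Definition mor_comp (M N K : Mod C) (s : Mor N K) (t : Mor M N) : Mor M K.
Proof.
refine (@Build_Mor C M K (fun A x => s A (t A x)) _ _).
- by move=> A x y; rewrite !ntD.
- by move=> A B f x; rewrite !ntN.
Defined.

Definition mor_id (M : Mod C) : Mor M M.
Proof. exact: (@Build_Mor C M M (fun A x => x)). Defined.

Definition mor_zero (M N : Mod C) : Mor M N.
Proof.
refine (@Build_Mor C M N (fun A x => 0) _ _).
- by move=> *; rewrite addr0.
- by move=> A B f x; rewrite mmapf0.
Defined.

Definition rep_mor (A B : Obj C) (f : cHom A B) : Mor (Rep A) (Rep B).
Proof.
refine (@Build_Mor C (Rep A) (Rep B) (fun X x => ccomp f x) _ _).
- by move=> X x y; rewrite /= compDr.
- by move=> X Y g x; rewrite /= ccompA.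
Defined.

Definition elem_mor (M : Mod C) (B : Obj C) (e : M B) : Mor (Rep B) M.
Proof.
refine (@Build_Mor C (Rep B) M (fun X x => mmap x e) _ _).
- by move=> X x y; rewrite mmapDf.
- by move=> X Y g x; rewrite /= mmapM.
Defined.

Lemma mor_repE (A : Obj C) (N : Mod C) (t : Mor (Rep A) N) X (x : cHom X A) :
  t X x = mmap x (t A (idm A)).
Proof. by rewrite -ntN /= comp1l. Qed.

Definition generated_by (N : Mod C) (S : forall X, N X -> Prop) (Q : Obj C) (e : N Q) :=
  forall X (y : N X), S X y <-> exists x : cHom X Q, mmap x e = y.

Definition elem_ker (N : Mod C) (Q : Obj C) (e : N Q) X (x : Rep Q X) := mmap x e = 0.

Definition presents (M : Mod C) (A1 A0 : Obj C) (f : cHom A1 A0) (e : M A0) :=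
  generated_by (fun _ _ => True) e /\ generated_by (elem_ker e) (f : Rep A0 A1).
End Yoneda.

Section Cokernel.
Variables (C : AddCat) (A1 A0 : Obj C) (f : cHom A1 A0).

Section Fiber.
Variable X : Obj C.
Implicit Types x y z : cHom X A0.

Definition coker_rel x y := exists h : cHom X A1, x - y = ccomp f h.

Lemma coker_rel_refl x : coker_rel x x.
Proof. by exists 0; rewrite subrr comp0r. Qed.

Lemma coker_rel_sym x y : coker_rel x y -> coker_rel y x.
Proof. by case=> h e; exists (- h); rewrite compNr -e opprB. Qed.

Lemma coker_relD x y x' y' :
  coker_rel x x' -> coker_rel y y' -> coker_rel (x + y) (x' + y').
Proof. by case=> h e [h' e']; exists (h + h'); rewrite compDr -e -e' opprD addrACA. Qed.

Lemma coker_relN x x' : coker_rel x x' -> coker_rel (- x) (- x').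
Proof. by case=> h e; exists (- h); rewrite compNr -e opprD. Qed.

Lemma coker_rel_trans x y z : coker_rel x y -> coker_rel y z -> coker_rel x z.
Proof. by case=> h e [h' e']; exists (h + h'); rewrite compDr -e -e' addrA subrK. Qed.

(* The quotient is encoded as the subtype of canonical representatives,
   chosen by Hilbert's epsilon. *)
Definition coker_rep x : cHom X A0 := epsilon (inhabits 0) (coker_rel x).

Lemma coker_rel_rep x : coker_rel x (coker_rep x).
Proof. by apply: epsilon_spec; exists x; apply: coker_rel_refl. Qed.

Lemma coker_rep_eq x y : coker_rel x y -> coker_rep x = coker_rep y.
Proof.
move=> Hxy; rewrite /coker_rep; congr epsilon.
apply: functional_extensionality => z; apply: propositional_extensionality.
by split; [apply: coker_rel_trans (coker_rel_sym Hxy) | apply: coker_rel_trans Hxy].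
Qed.

Lemma coker_repK x : coker_rep (coker_rep x) == coker_rep x.
Proof. by apply/eqP/coker_rep_eq/coker_rel_sym/coker_rel_rep. Qed.

Definition coker_type := {x : cHom X A0 | coker_rep x == x}.
HB.instance Definition _ := Choice.on coker_type.

Definition coker_pi x : coker_type := exist _ (coker_rep x) (coker_repK x).

Lemma coker_piP x y : coker_pi x = coker_pi y <-> coker_rel x y.
Proof.
split=> [/(congr1 val) /= Hxy | /coker_rep_eq Hxy]; last exact: val_inj.
apply: coker_rel_trans (coker_rel_rep x) _.
by rewrite Hxy; apply/coker_rel_sym/coker_rel_rep.
Qed.

Lemma coker_piK (q : coker_type) : coker_pi (val q) = q.
Proof. by apply: val_inj; apply/eqP; case: q. Qed.

Lemma coker_ind (P : coker_type -> Prop) : (forall x, P (coker_pi x)) -> forall q, P q.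
Proof. by move=> HP q; rewrite -(coker_piK q). Qed.

Lemma coker_rel_val x : coker_rel (val (coker_pi x)) x.
Proof. exact/coker_rel_sym/coker_rel_rep. Qed.

Definition coker_add (a b : coker_type) := coker_pi (val a + val b).
Definition coker_opp (a : coker_type) := coker_pi (- val a).

Lemma coker_addE x y : coker_add (coker_pi x) (coker_pi y) = coker_pi (x + y).
Proof. by apply/coker_piP/coker_relD; apply: coker_rel_val. Qed.

Lemma coker_oppE x : coker_opp (coker_pi x) = coker_pi (- x).
Proof. by apply/coker_piP/coker_relN/coker_rel_val. Qed.

Lemma coker_addA : associative coker_add.
Proof. by do 3!elim/coker_ind=> ?; rewrite !coker_addE addrA. Qed.

Lemma coker_addC : commutative coker_add.
Proof. by do 2!elim/coker_ind=> ?; rewrite !coker_addE addrC. Qed.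

Lemma coker_add0 : left_id (coker_pi 0) coker_add.
Proof. by elim/coker_ind=> x; rewrite coker_addE add0r. Qed.

Lemma coker_addN : left_inverse (coker_pi 0) coker_opp coker_add.
Proof. by elim/coker_ind=> x; rewrite coker_oppE coker_addE addNr. Qed.

HB.instance Definition _ :=
  GRing.isZmodule.Build coker_type coker_addA coker_addC coker_add0 coker_addN.

Lemma coker_piD x y : coker_pi (x + y) = coker_pi x + coker_pi y.
Proof. by rewrite -coker_addE. Qed.

Lemma coker_pi_eq0 x : coker_pi x = 0 <-> exists h, x = ccomp f h.
Proof. by rewrite -[0]/(coker_pi 0) coker_piP /coker_rel subr0. Qed.
End Fiber.

Definition coker_map (X Y : Obj C) (g : cHom X Y) (q : coker_type Y) : coker_type X :=
  coker_pi (ccomp (val q) g).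

Lemma coker_mapE X Y (g : cHom X Y) x : coker_map g (coker_pi x) = coker_pi (ccomp x g).
Proof.
apply/coker_piP; case: (coker_rel_val x) => h e.
by exists (ccomp h g); rewrite ccompA -e compBl.
Qed.

Definition Coker : Mod C.
Proof.
refine (@Build_Mod C coker_type coker_map _ _ _ _).
- by move=> X Y g1 g2; elim/coker_ind=> x; rewrite !coker_mapE compDr coker_piD.
- by move=> X Y g; do 2!elim/coker_ind=> ?; rewrite -coker_piD !coker_mapE compDl coker_piD.
- by move=> X; elim/coker_ind=> x; rewrite coker_mapE comp1r.
- by move=> X Y Z g1 g2; elim/coker_ind=> x; rewrite !coker_mapE ccompA.
Defined.

Definition coker_proj : Mor (Rep A0) Coker.
Proof.
refine (@Build_Mor C (Rep A0) Coker (fun X x => coker_pi x) _ _).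
- by move=> X x y; rewrite coker_piD.
- by move=> X Y g x; rewrite /= coker_mapE.
Defined.
End Cokernel.

Section Representable.
Variable C : AddCat.

Definition mor_add (M N : Mod C) (s t : Mor M N) : Mor M N.
Proof.
refine (@Build_Mor C M N (fun A x => s A x + t A x) _ _).
- by move=> A x y; rewrite !ntD addrACA.
- by move=> A B g x; rewrite !ntN mmapDx.
Defined.

Definition mor_iso (M N : Mod C) (u : Mor M N) (v : Mor N M) :=
  (forall X y, u X (v X y) = y) /\ (forall X x, v X (u X x) = x).

Definition representable (M : Mod C) :=
  exists (B : Obj C) (u : Mor (Rep B) M) (v : Mor M (Rep B)), mor_iso u v.

Lemma rep_fin_free (A : Obj C) : fin_free (Rep A).
Proof.
exists 1%N, (fun _ => A), (fun _ => mor_id (Rep A)), (fun _ => mor_id (Rep A)).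
by split=> // [k k'|B x]; rewrite ?big_ord1 // !ord1.
Qed.

Lemma rep_fg_proj (A : Obj C) : fg_proj (Rep A).
Proof. by exists (Rep A), (mor_id _), (mor_id _); split=> //; apply: rep_fin_free. Qed.

(* Only orthogonality is assumed, so that the statement restricts to the
   summands indexed by [lift ord0] in the induction. *)
Lemma fin_biprod_rep n (N : Mod C) (A : 'I_n -> Obj C)
    (i : forall k, Mor (Rep (A k)) N) (p : forall k, Mor N (Rep (A k))) :
  (forall k X x, p k X (i k X x) = x) ->
  (forall k k', k != k' -> forall X x, p k X (i k' X x) = 0) ->
  exists (B : Obj C) (u : Mor (Rep B) N) (v : Mor N (Rep B)),
    (forall X y, u X (v X y) = \sum_(k < n) i k X (p k X y)) /\
    (forall X x, v X (u X x) = x).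
Proof.
elim: n A i p => [|n IH] A i p pi_id pi_orth.
  case: (zero_obj C) => Z HZ.
  exists Z, (mor_zero _ _), (mor_zero _ _).
  by split=> X *; rewrite ?big_ord0 //; apply: zero_obj_hom_eq HZ _ _ _.
have lift_neq (j j' : 'I_n) : j != j' -> lift ord0 j != lift ord0 j'.
  by rewrite (inj_eq (@lift_inj _ ord0)).
have [B' [u' [v' [uv' vu']]]] := IH _ _ _ (fun j => pi_id (lift ord0 j))
  (fun j j' ne => pi_orth _ _ (lift_neq j j' ne)).
have p0u' X x : p ord0 X (u' X x) = 0.
  rewrite -(vu' X x) uv' mor_sum big1 // => j _.
  by apply: pi_orth; rewrite neq_lift.
have v'i0 X x : v' X (i ord0 X x) = 0.
  rewrite -[LHS](vu' X) uv' big1 ?mor0 // => j _.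
  by rewrite pi_orth ?mor0 // neq_lift.
case: (biprod (A ord0) B') => D [i1 [i2 [p1 [p2 [e11 e22 e12 e21 eid]]]]].
exists D, (mor_add (mor_comp (i ord0) (rep_mor p1)) (mor_comp u' (rep_mor p2))),
  (mor_add (mor_comp (rep_mor i1) (p ord0)) (mor_comp (rep_mor i2) v')).
split=> X x /=.
- rewrite big_ord_recl -uv' !compDr !ccompA e11 e22 e12 e21 !comp0l !comp1l.
  by rewrite addr0 add0r.
- rewrite !ntD p0u' v'i0 pi_id vu' addr0 add0r !ccompA -compDl eid.
  exact: comp1l.
Qed.

Lemma fin_free_representable (F : Mod C) : fin_free F -> representable F.
Proof.
case=> n [A [i [p [pi_id pi_orth sum_id]]]].
have [B [u [v [uv vu]]]] := fin_biprod_rep pi_id pi_orth.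
by exists B, u, v; split=> // X y; rewrite uv sum_id.
Qed.

Hypothesis HC : idem_complete C.

(* The retraction of Rep B onto P is induced by an idempotent of B, which splits. *)
Lemma retract_rep_representable (P : Mod C) (B : Obj C)
    (j : Mor P (Rep B)) (q : Mor (Rep B) P) :
  (forall X y, q X (j X y) = y) -> representable P.
Proof.
move=> qj.
pose e := j B (q B (idm B)).
have jqE X (x : cHom X B) : j X (q X x) = ccomp e x.
  exact: (mor_repE (mor_comp j q) x).
have ee : ccomp e e = e by rewrite -jqE /e qj.
case: (HC ee) => D [E [i1 [_ [p1 [_ [e11 _ _ _ [_ eE]]]]]]].
exists D, (mor_comp q (rep_mor i1)), (mor_comp (rep_mor p1) j); split=> X x /=.
- by rewrite ccompA -eE -jqE !qj.
- by rewrite jqE eE -!ccompA ccompA e11 comp1l ccompA e11 comp1l.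
Qed.

Lemma fg_proj_representable (P : Mod C) : fg_proj P -> representable P.
Proof.
case=> F [iP [rP [/fin_free_representable [B [u [v [uv _]]]] ri]]].
apply: (retract_rep_representable (j := mor_comp v iP) (q := mor_comp rP u)).
by move=> X y /=; rewrite uv ri.
Qed.
End Representable.

Section Presentations.
Variable C : AddCat.

Lemma presents_of_fin_pres (M : Mod C) : fin_pres M ->
  exists (A1 A0 : Obj C) (f : cHom A1 A0) (e : M A0), presents f e.
Proof.
case=> F1 [F0 [t [s [/fin_free_representable [A1 [u1 [v1 [uv1 vu1]]]]
                     /fin_free_representable [A0 [u0 [v0 [uv0 vu0]]]] [st ker_s] s_surj]]]].
pose f := mor_comp v0 (mor_comp t u1). pose e := mor_comp s u0.
exists A1, A0, (f A1 (idm A1)), (e A0 (idm A0)).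
have fE X (x : cHom X A1) : v0 X (t X (u1 X x)) = ccomp (f A1 (idm A1)) x.
  exact: (mor_repE f x).
have eE X (x : cHom X A0) : s X (u0 X x) = mmap x (e A0 (idm A0)).
  exact: (mor_repE e x).
split=> X y.
- by split=> // _; case: (s_surj X y) => w <-; exists (v0 X w); rewrite -eE uv0.
- split=> [|[z <-]]; rewrite /elem_ker -eE.
  + by case/ker_s=> w tw; exists (v1 X w); rewrite /= -fE uv1 tw vu0.
  + by rewrite /= -fE uv0 st.
Qed.

Lemma coker_presents (A1 A0 : Obj C) (f : cHom A1 A0) :
  exists (M : Mod C) (e : M A0), fin_pres M /\ presents f e.
Proof.
exists (Coker f), (coker_pi f (idm A0)); split; last split.
- exists (Rep A1), (Rep A0), (rep_mor f), (coker_proj f).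
  split; try exact: rep_fin_free; last by move=> X y; exists (val y); apply: coker_piK.
  split=> X x /=; first by apply/coker_pi_eq0; exists x.
  by case/coker_pi_eq0=> h ->; exists h.
- by move=> X y; split=> // _; exists (val y); rewrite /= coker_mapE comp1l coker_piK.
- move=> X x; rewrite /elem_ker /= coker_mapE comp1l coker_pi_eq0.
  by split=> -[z ez]; exists z; rewrite ez.
Qed.

Lemma fin_pres_forallP (Q : Mod C -> Prop) (P : forall A1 A0 : Obj C, cHom A1 A0 -> Prop) :
  (forall (M : Mod C) A1 A0 (f : cHom A1 A0) (e : M A0), presents f e -> (Q M <-> P A1 A0 f)) ->
  (forall M, fin_pres M -> Q M) <-> (forall A1 A0 (f : cHom A1 A0), P A1 A0 f).
Proof.
move=> QP; split=> [HQ A1 A0 f | HP M /presents_of_fin_pres [A1 [A0 [f [e Hfe]]]]].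
- by case: (coker_presents f) => M [e [/HQ QM Hfe]]; apply/(QP _ _ _ _ _ Hfe).
- exact/(QP _ _ _ _ _ Hfe).
Qed.
End Presentations.

Section Kernels.
Variables (C : AddCat) (HC : idem_complete C).

Lemma split_epi_kernel (D B : Obj C) (phi : cHom D B) (rho : cHom B D) :
  ccomp phi rho = idm B ->
  exists (L : Obj C) (j : cHom L D) (q : cHom D L),
    [/\ ccomp q j = idm L, ccomp phi j = 0 &
        forall X (h : cHom X D), ccomp phi h = 0 -> ccomp j (ccomp q h) = h].
Proof.
move=> phi_rho; pose pi := idm D - ccomp rho phi.
have pi_idem : ccomp pi pi = pi.
  rewrite /pi compBl comp1l compBr comp1r -ccompA (ccompA phi) phi_rho comp1l.
  by rewrite subrr subr0.
case: (HC pi_idem) => L [E [j [_ [q [_ [qj _ _ _ [_ piE]]]]]]].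
exists L, j, q; split=> // [|X h phi_h].
- rewrite -[j]comp1r -qj (ccompA j) -piE /pi compBl comp1l compBr ccompA.
  by rewrite (ccompA phi rho) phi_rho comp1l subrr.
- by rewrite ccompA -piE /pi compBl comp1l -ccompA phi_h comp0r subr0.
Qed.

Lemma cokernel_of_regular (A1 A0 : Obj C) (f : cHom A1 A0) (g : cHom A0 A1) :
  ccomp f (ccomp g f) = f ->
  exists (Am1 : Obj C) (f0 : cHom A0 Am1), cexact f f0 /\ csurj f0.
Proof.
move=> fgf; pose p := idm A0 - ccomp f g.
have fg_idem : ccomp (ccomp f g) (ccomp f g) = ccomp f g.
  by rewrite -ccompA (ccompA g) ccompA fgf.
have p_idem : ccomp p p = p by rewrite /p compBl comp1l compBr comp1r fg_idem subrr subr0.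
case: (HC p_idem) => D [E [i1 [_ [p1 [_ [e11 _ _ _ [_ pE]]]]]]].
have p1p : ccomp p1 p = p1 by rewrite pE ccompA e11 comp1l.
exists D, p1; split; first split.
- by rewrite -p1p -ccompA /p compBl comp1l -ccompA fgf subrr comp0r.
- move=> X h p1h; have : ccomp p h = 0 by rewrite pE -ccompA p1h comp0r.
  rewrite /p compBl comp1l => /eqP; rewrite subr_eq0 => /eqP hE.
  by exists (ccomp g h); rewrite ccompA -hE.
- by move=> X h; exists (ccomp i1 h); rewrite ccompA e11 comp1l.
Qed.
End Kernels.

(* [S] (a subfunctor of [N], given as a predicate) has a resolution
   0 -> Rep (B m) -> ... -> Rep (B 0) -> S -> 0 by representables; the
   augmentation is the Yoneda map of [e]. *)
Definition rep_resolution (C : AddCat) (N : Mod C) (S : forall X, N X -> Prop) (m : nat) :=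
  exists (B : nat -> Obj C) (g : forall i, cHom (B i.+1) (B i)) (e : N (B 0%N)),
  [/\ generated_by S e,
      m = 0%N -> forall X (x : Rep (B 0%N) X), elem_ker e x -> x = 0,
      (0 < m)%N -> generated_by (elem_ker e) (g 0%N : Rep (B 0%N) (B 1%N))
    & chain_exact g m].

(* Dimension shifting: given a resolution of [S] and a generator [sig] of [S]
   at [Q], the map [phi = (g 0, a) : B 1 (+) Q -> B 0] is a split epimorphism
   onto a representable, and its kernel [L] resolves the kernel of the Yoneda
   map of [sig], one step shorter. *)
Section Shift.
Variables (C : AddCat) (N : Mod C) (S : forall X, N X -> Prop) (Q : Obj C) (sig : N Q).
Variables (m : nat) (B : nat -> Obj C) (g : forall i, cHom (B i.+1) (B i)) (e : N (B 0%N)).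
Hypotheses (S_e : generated_by S e) (g_exact : chain_exact g m.+1).
Hypothesis ker_e : generated_by (elem_ker e) (g 0%N : Rep (B 0%N) (B 1%N)).
Variables (a : cHom Q (B 0%N)) (D : Obj C).
Variables (in1 : cHom (B 1%N) D) (in2 : cHom Q D) (pr1 : cHom D (B 1%N)) (pr2 : cHom D Q).
Hypotheses (a_e : mmap a e = sig) (e11 : ccomp pr1 in1 = idm _) (e22 : ccomp pr2 in2 = idm _).
Hypotheses (e12 : ccomp pr1 in2 = 0) (e21 : ccomp pr2 in1 = 0).
Hypothesis eid : ccomp in1 pr1 + ccomp in2 pr2 = idm D.

Local Notation phi := (ccomp (g 0%N) pr1 + ccomp a pr2).

Lemma biprod_phiE X (h : cHom X D) :
  ccomp phi h = ccomp (g 0%N) (ccomp pr1 h) + ccomp a (ccomp pr2 h).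
Proof. by rewrite compDl !ccompA. Qed.

Lemma biprod_phiE_in X (z : cHom X (B 1%N)) (y : cHom X Q) :
  ccomp phi (ccomp in1 z + ccomp in2 y) = ccomp (g 0%N) z + ccomp a y.
Proof.
rewrite biprod_phiE !compDr !(ccompA pr1) !(ccompA pr2) e11 e22 e12 e21.
by rewrite !comp0l !comp1l !comp0r addr0 add0r.
Qed.

Lemma biprod_phi_surj : generated_by S sig ->
  forall X (p : cHom X (B 0%N)), exists h : cHom X D, ccomp phi h = p.
Proof.
move=> S_sig X p.
have [y y_sig] : exists y : cHom X Q, mmap y sig = mmap p e by apply/S_sig/S_e; exists p.
have [z gz] : exists z, ccomp (g 0%N) z = p - ccomp a y.
  by apply/ker_e; rewrite /elem_ker mmapBf mmapM a_e y_sig subrr.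
by exists (ccomp in1 z + ccomp in2 y); rewrite biprod_phiE_in gz subrK.
Qed.

Variables (L : Obj C) (j : cHom L D) (q : cHom D L).
Hypotheses (qj : ccomp q j = idm L) (phi_j : ccomp phi j = 0).
Hypothesis jq : forall X (h : cHom X D), ccomp phi h = 0 -> ccomp j (ccomp q h) = h.

Definition shift_obj i := match i with 0%N => L | k.+1 => B k.+2 end.

Definition shift_map i : cHom (shift_obj i.+1) (shift_obj i) :=
  match i with 0%N => ccomp q (ccomp in1 (g 1%N)) | k.+1 => g k.+2 end.

Lemma phi_jE X (x : cHom X L) :
  ccomp (g 0%N) (ccomp pr1 (ccomp j x)) + ccomp a (ccomp pr2 (ccomp j x)) = 0.
Proof. by rewrite -biprod_phiE ccompA phi_j comp0l. Qed.

Lemma g0_pr1_j X (x : cHom X L) : ccomp (ccomp pr2 j) x = 0 ->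
  ccomp (g 0%N) (ccomp pr1 (ccomp j x)) = 0.
Proof. by move=> pr2jx; have := phi_jE x; rewrite (ccompA pr2) pr2jx comp0r addr0. Qed.

Lemma j_in1 X (x : cHom X L) : ccomp (ccomp pr2 j) x = 0 ->
  ccomp j x = ccomp in1 (ccomp pr1 (ccomp j x)).
Proof.
move=> pr2jx; rewrite -{1}[ccomp j x]comp1l -eid compDl -!ccompA.
by rewrite (ccompA pr2) pr2jx !comp0r addr0.
Qed.

Lemma jq_in1 X (y : cHom X (B 1%N)) : ccomp (g 0%N) y = 0 ->
  ccomp j (ccomp q (ccomp in1 y)) = ccomp in1 y.
Proof.
move=> gy; apply: jq.
by rewrite biprod_phiE (ccompA pr1) (ccompA pr2) e11 e21 comp1l comp0l comp0r addr0.
Qed.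

Lemma q_in1_eq0 X (y : cHom X (B 1%N)) : ccomp (g 0%N) y = 0 ->
  ccomp q (ccomp in1 y) = 0 -> y = 0.
Proof.
move=> gy qy; have := jq_in1 gy; rewrite qy comp0r => /(congr1 (ccomp pr1)).
by rewrite comp0r ccompA e11 comp1l.
Qed.

Lemma shift_generated : generated_by (elem_ker sig) (ccomp pr2 j : Rep Q L).
Proof.
move=> X y; split=> [y_sig | [x <-]].
- have [z gz] : exists z, ccomp (g 0%N) z = ccomp a y.
    by apply/ker_e; rewrite /elem_ker mmapM a_e.
  pose h := ccomp in1 (- z) + ccomp in2 y.
  have phi_h : ccomp phi h = 0 by rewrite biprod_phiE_in compNr gz addNr.
  exists (ccomp q h); rewrite /= -ccompA jq // compDr !ccompA e21 e22 comp0l comp1l.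
  exact: add0r.
- rewrite /elem_ker /= -a_e -mmapM.
  have -> : ccomp a (ccomp (ccomp pr2 j) x) = - ccomp (g 0%N) (ccomp pr1 (ccomp j x)).
    by apply/eqP; rewrite -addr_eq0 addrC -(ccompA pr2); apply/eqP/phi_jE.
  rewrite mmapNf; apply/eqP; rewrite oppr_eq0; apply/eqP.
  by apply/ker_e; exists (ccomp pr1 (ccomp j x)).
Qed.

Lemma shift_mono : m = 0%N ->
  forall X (x : cHom X L), ccomp (ccomp pr2 j) x = 0 -> x = 0.
Proof.
move=> m0 X x pr2jx; rewrite -[x]comp1l -qj -ccompA j_in1 //.
by rewrite (proj2 g_exact 0%N (congr1 succn m0) _ _ (g0_pr1_j pr2jx)) !comp0r.
Qed.

Lemma shift_ker : (0 < m)%N ->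
  generated_by (elem_ker (ccomp pr2 j : Rep Q L)) (shift_map 0%N : Rep L (B 2)).
Proof.
move=> m_gt0 X x; have [g10 g_ex1] := proj1 g_exact 0%N m_gt0.
have g0g1 z : ccomp (g 0%N) (ccomp (g 1%N) z) = 0 by rewrite ccompA g10 comp0l.
split=> [pr2jx | [z <-]].
- have [z gz] := g_ex1 _ _ (g0_pr1_j pr2jx).
  by exists z; rewrite /= -!ccompA gz -j_in1 // ccompA qj comp1l.
- by rewrite /elem_ker /= -!ccompA jq_in1 ?g0g1 // ccompA e21 comp0l.
Qed.

Lemma shift_chain : chain_exact shift_map m.
Proof.
have g1_eq0 X (h : cHom X (B 2)) :
    (0 < m)%N -> ccomp (shift_map 0%N) h = 0 -> ccomp (g 1%N) h = 0.
  move=> m_gt0; rewrite /= -!ccompA; apply: q_in1_eq0.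
  by rewrite ccompA (proj1 (proj1 g_exact 0%N m_gt0)) comp0l.
split=> [[|i] i_lt | [|k] mk] /=.
- have [g21 g_ex2] := proj1 g_exact 1%N i_lt.
  split=> [|X h /(g1_eq0 _ _ (ltnW i_lt)) /g_ex2 //].
  by rewrite -!ccompA g21 !comp0r.
- exact: (proj1 g_exact i.+2 i_lt).
- move=> X h /(g1_eq0 _ _ _) g1h; apply: (proj2 g_exact 1%N (congr1 succn mk)).
  by apply: g1h; rewrite mk.
- exact: (proj2 g_exact k.+2 (congr1 succn mk)).
Qed.
End Shift.

Lemma rep_resolution_shift (C : AddCat) (HC : idem_complete C) (N : Mod C)
    (S : forall X, N X -> Prop) (Q : Obj C) (sig : N Q) m :
  generated_by S sig -> rep_resolution S m.+1 -> rep_resolution (elem_ker sig) m.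
Proof.
move=> S_sig [B [g [e [S_e _ /(_ (ltn0Sn m)) ker_e g_exact]]]].
have [a a_e] : exists a : cHom Q (B 0%N), mmap a e = sig.
  by apply/S_e/S_sig; exists (idm Q); rewrite mmap1.
case: (biprod (B 1%N) Q) => D [in1 [in2 [pr1 [pr2 [e11 e22 e12 e21 eid]]]]].
have [rho phi_rho] := biprod_phi_surj S_e ker_e a_e e11 e22 e12 e21 S_sig (idm _).
have [L [j [q [qj phi_j jq]]]] := split_epi_kernel HC phi_rho.
exists (shift_obj B L), (shift_map g in1 q), (ccomp pr2 j); split.
- exact: (shift_generated ker_e a_e e11 e22 e12 e21 phi_j jq).
- exact: (shift_mono g_exact eid qj phi_j).
- exact: (shift_ker g_exact e11 e21 eid qj phi_j jq).
- exact: (shift_chain g_exact e11 e21 jq).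
Qed.

Section RepResolutionOfResolution.
Variables (C : AddCat) (M : Mod C) (m : nat) (P : nat -> Mod C).
Variables (d : forall i, Mor (P i.+1) (P i)) (e : Mor (P 0%N) M).
Variables (D : nat -> Obj C) (phi : forall i, Mor (Rep (D i)) (P i)).
Variable psi : forall i, Mor (P i) (Rep (D i)).
Hypothesis phi_psi : forall i, (i <= m)%N -> mor_iso (phi i) (psi i).

Definition transport_map i : cHom (D i.+1) (D i) :=
  psi i _ (d i _ (phi i.+1 _ (idm (D i.+1)))).

Definition transport_elem : M (D 0%N) := e _ (phi 0%N _ (idm (D 0%N))).

Lemma transport_mapE i X (x : cHom X (D i.+1)) :
  psi i X (d i X (phi i.+1 X x)) = ccomp (transport_map i) x.
Proof. exact: (mor_repE (mor_comp (psi i) (mor_comp (d i) (phi i.+1))) x). Qed.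

Lemma transport_elemE X (x : cHom X (D 0%N)) : e X (phi 0%N X x) = mmap x transport_elem.
Proof. exact: (mor_repE (mor_comp e (phi 0%N)) x). Qed.

Lemma transport_generated : msurj e -> generated_by (fun _ _ => True) transport_elem.
Proof.
move=> e_surj X y; split=> // _; case: (e_surj X y) => p <-.
by exists (psi 0%N X p); rewrite -transport_elemE (proj1 (phi_psi _)).
Qed.

Lemma transport_elem_mono : minj e ->
  forall X (x : Rep (D 0%N) X), elem_ker transport_elem x -> x = 0.
Proof.
move=> e_inj X x; rewrite /elem_ker -transport_elemE => /e_inj phi_x.
by rewrite -(proj2 (phi_psi _) X x) // phi_x mor0.
Qed.

Lemma transport_ker : (0 < m)%N -> mexact (d 0%N) e ->
  generated_by (elem_ker transport_elem) (transport_map 0%N : Rep (D 0%N) (D 1%N)).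
Proof.
move=> m_gt0 [ed ker_e] X x; rewrite /elem_ker -transport_elemE; split.
- case/ker_e=> w dw; exists (psi 1%N X w).
  by rewrite /= -transport_mapE (proj1 (phi_psi _)) // dw (proj2 (phi_psi _)).
- by case=> z <-; rewrite /= -transport_mapE (proj1 (phi_psi _)).
Qed.

Lemma transport_exact i : (i.+1 < m)%N -> mexact (d i.+1) (d i) ->
  cexact (transport_map i.+1) (transport_map i).
Proof.
move=> i_lt [dd ker_d]; have i_le : (i <= m)%N by rewrite ltnW // ltnW.
split=> [|X h].
- by rewrite -transport_mapE (proj1 (phi_psi _)) ?dd ?mor0 // ltnW.
- rewrite -transport_mapE => psi_h.
  have : d i X (phi i.+1 X h) = 0 by rewrite -[LHS](proj1 (phi_psi i_le) X) psi_h mor0.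
  case/ker_d=> w dw; exists (psi i.+2 X w).
  by rewrite -transport_mapE (proj1 (phi_psi _)) // dw (proj2 (phi_psi _)) // ltnW.
Qed.

Lemma transport_mono k : (k < m)%N -> minj (d k) -> cexact_zero_left (transport_map k).
Proof.
move=> k_lt d_inj X h; rewrite -transport_mapE => psi_h.
have : d k X (phi k.+1 X h) = 0 by rewrite -[LHS](proj1 (phi_psi (ltnW k_lt)) X) psi_h mor0.
by move/d_inj=> phi_h; rewrite -(proj2 (phi_psi k_lt) X h) phi_h mor0.
Qed.
End RepResolutionOfResolution.

Section Resolutions.
Variable C : AddCat.
Implicit Types M : Mod C.

Lemma representable_family (P : nat -> Mod C) m :
  (forall i, (i <= m)%N -> representable (P i)) ->
  exists (D : nat -> Obj C) (phi : forall i, Mor (Rep (D i)) (P i))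
         (psi : forall i, Mor (P i) (Rep (D i))),
    forall i, (i <= m)%N -> mor_iso (phi i) (psi i).
Proof.
move=> P_rep; case: (zero_obj C) => Z _.
have pick i : exists x : {D : Obj C & (Mor (Rep D) (P i) * Mor (P i) (Rep D))%type},
    (i <= m)%N -> mor_iso (projT2 x).1 (projT2 x).2.
  case: (leqP i m) => [/P_rep [D [u [v uv]]] | _].
  - by exists (existT _ D (u, v)).
  - by exists (existT _ Z (mor_zero _ _, mor_zero _ _)).
pose F i := proj1_sig (constructive_indefinite_description _ (pick i)).
exists (fun i => projT1 (F i)), (fun i => (projT2 (F i)).1), (fun i => (projT2 (F i)).2).
by move=> i; apply: (proj2_sig (constructive_indefinite_description _ (pick i))).
Qed.

Lemma resolution_of_rep_resolution M m :
  rep_resolution (fun X (_ : M X) => True) m -> has_resolution M m.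
Proof.
case=> B [g [e [S_e e_mono e_ker g_exact]]].
exists (fun i => Rep (B i)), (fun i => rep_mor (g i)), (elem_mor e); split.
- by move=> i _; apply: rep_fg_proj.
- by move=> X y; case: (proj1 (S_e X y) I) => x <-; exists x.
- move=> m_gt0; split=> X x /=; first by apply/(e_ker m_gt0); exists x.
  by case/(e_ker m_gt0)=> z <-; exists z.
- move=> i i_lt; have [gg g_ex] := proj1 g_exact i i_lt; split=> X x /=.
  + by rewrite ccompA gg comp0l.
  + by case/g_ex=> z <-; exists z.
- case: m e_mono g_exact {e_ker S_e} => [|k] e_mono g_exact X x /=.
  + exact: e_mono.
  + exact: (proj2 g_exact k erefl X x).
Qed.

Lemma rep_resolution_of_resolution (HC : idem_complete C) M m :
  has_resolution M m -> rep_resolution (fun X (_ : M X) => True) m.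
Proof.
case=> P [d [e [P_fg e_surj exact0 exact_d d_last]]].
have [D [phi [psi phi_psi]]] :=
  representable_family (fun i i_le => fg_proj_representable HC (P_fg i i_le)).
exists D, (transport_map d phi psi), (transport_elem e phi); split.
- exact: transport_generated phi_psi e_surj.
- by move=> m0; apply: transport_elem_mono phi_psi _; move: d_last; rewrite m0.
- by move=> m_gt0; apply: transport_ker phi_psi m_gt0 (exact0 m_gt0).
- split=> [i i_lt | k mk].
  + exact: (transport_exact phi_psi i_lt (exact_d i i_lt)).
  + have k_lt : (k < m)%N by rewrite mk.
    by apply: (transport_mono phi_psi k_lt); rewrite mk in d_last.
Qed.
End Resolutions.

Lemma has_rep_resolutionP (C : AddCat) (HC : idem_complete C) (M : Mod C) m :
  has_resolution M m <-> rep_resolution (fun X (_ : M X) => True) m.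
Proof.
by split; [apply: rep_resolution_of_resolution | apply: resolution_of_rep_resolution].
Qed.

Section Padding.
Variables (C : AddCat) (N : Mod C) (S : forall X, N X -> Prop).

Lemma rep_resolution1_of0 : rep_resolution S 0 -> rep_resolution S 1.
Proof.
case: (zero_obj C) => Z HZ [B [g [e [S_e e_mono _ _]]]].
exists (fun i => if i is 0%N then B 0%N else Z), (fun _ => 0), e; split=> //.
- move=> _ X x; split=> [/(e_mono erefl) -> | [z <-]].
  + by exists 0; apply: comp0l.
  + by rewrite /elem_ker /= comp0l mmap0f.
- by split=> // k [<-] X h _; apply: zero_obj_hom_eq HZ _ _ _.
Qed.

Lemma rep_resolution2_of1 : rep_resolution S 1 -> rep_resolution S 2.
Proof.
case: (zero_obj C) => Z HZ [B [g [e [S_e _ e_ker [_ g0_mono]]]]].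
pose B' i := match i with 0%N => B 0%N | 1%N => B 1%N | _ => Z end.
pose g' i : cHom (B' i.+1) (B' i) := if i is 0%N then g 0%N else 0.
exists B', g', e; split=> //; split=> [[|i] // _ | k [<-] X h _].
- split=> [|X h /(g0_mono 0%N erefl) ->]; first exact: comp0r.
  by exists 0; rewrite comp0r.
- exact: zero_obj_hom_eq HZ _ _ _.
Qed.
End Padding.

Section Chains.
Variable C : AddCat.

Lemma chain_of_rep_resolution (A1 A0 : Obj C) (f : cHom A1 A0) m :
  rep_resolution (elem_ker (f : Rep A0 A1)) m ->
  exists (Y : nat -> Obj C) (d : forall i, cHom (ext_obj A0 A1 Y i.+1) (ext_obj A0 A1 Y i)),
    d 0%N = f /\ chain_exact d m.+2.
Proof.
case=> B [g [b [b_gen b_mono b_ker g_exact]]].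
exists B, (fun i => match i return cHom (ext_obj A0 A1 B i.+1) (ext_obj A0 A1 B i) with
                | 0%N => f | 1%N => b | k.+2 => g k end).
split=> //; split=> [[|[|i]] i_lt | [|[|k]] // [mk]] /=.
- split=> [|X h fh]; last exact/b_gen.
  by apply/b_gen; exists (idm _); rewrite mmap1.
- split=> [|X h gh]; last exact/(b_ker i_lt).
  by apply/(b_ker i_lt); exists (idm _); rewrite mmap1.
- exact: (proj1 g_exact i i_lt).
- exact: (b_mono mk).
- exact: (proj2 g_exact k mk).
Qed.

Lemma rep_resolution_of_chain (M : Mod C) (A1 A0 : Obj C) (f : cHom A1 A0) (e : M A0)
    (Y : nat -> Obj C) (d : forall i, cHom (ext_obj A0 A1 Y i.+1) (ext_obj A0 A1 Y i)) n :
  presents f e -> d 0%N = f -> (0 < n)%N -> chain_exact d n ->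
  rep_resolution (fun X (_ : M X) => True) n.
Proof.
move=> [e_gen e_ker] d0 n_gt0 d_exact.
exists (ext_obj A0 A1 Y), d, e; split=> //; first by move=> n0; rewrite n0 in n_gt0.
by rewrite d0.
Qed.
End Chains.

Section Presentation.
Variables (C : AddCat) (HC : idem_complete C) (M : Mod C).
Variables (A1 A0 : Obj C) (f : cHom A1 A0) (e : M A0).
Hypothesis fe : presents f e.

Local Notation full := (fun X (_ : M X) => True).

Lemma rep_resolution_chainP k :
  rep_resolution full k.+2 <->
  exists (Y : nat -> Obj C) (d : forall i, cHom (ext_obj A0 A1 Y i.+1) (ext_obj A0 A1 Y i)),
    d 0%N = f /\ chain_exact d k.+2.
Proof.
split=> [|[Y [d [d0 d_exact]]]]; last exact: rep_resolution_of_chain fe d0 _ d_exact.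
by move/(rep_resolution_shift HC fe.1)/(rep_resolution_shift HC fe.2)/chain_of_rep_resolution.
Qed.

Lemma has_resolution_chainP l : (2 <= l)%N ->
  has_resolution M l <->
  exists (Y : nat -> Obj C) (d : forall i, cHom (ext_obj A0 A1 Y i.+1) (ext_obj A0 A1 Y i)),
    d 0%N = f /\ chain_exact d l.
Proof. by case: l => [|[|k]] // _; rewrite has_rep_resolutionP //; apply: rep_resolution_chainP. Qed.

Lemma has_resolution1_factorP :
  has_resolution M 1 <->
  exists (B : Obj C) (f1 : cHom A1 B) (f0 : cHom B A0), [/\ f = ccomp f0 f1, csurj f1 & cinj f0].
Proof.
rewrite has_rep_resolutionP //; split.
- move/(rep_resolution_shift HC fe.1)=> [B [_ [b [b_gen /(_ erefl) b_mono _ _]]]].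
  have b_inj X (h h' : cHom X (B 0%N)) : ccomp b h = ccomp b h' -> h = h'.
    by move=> bh; apply/eqP; rewrite -subr_eq0; apply/eqP/b_mono; rewrite /elem_ker /= compBr bh subrr.
  have [f1 bf1] : exists f1, ccomp b f1 = f by apply/b_gen/fe.2; exists (idm _); rewrite mmap1.
  exists (B 0%N), f1, b; split=> // X h.
  have [z fz] : exists z, ccomp f z = ccomp b h by apply/fe.2/b_gen; exists h.
  by exists z; apply: b_inj; rewrite ccompA bf1.
- case=> B [f1 [f0 [ff f1_surj f0_inj]]].
  pose B' i := if i is 0%N then A0 else B.
  exists B', (fun i => if i is 0%N return cHom B (B' i) then f0 else 0), e; split=> //.
  + exact: fe.1.
  + move=> _ X x; split=> [/fe.2 [z <-] | [w <-]].
    * by exists (ccomp f1 z); rewrite /= ff ccompA.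
    * by have [z <-] := f1_surj X w; apply/fe.2; exists z; rewrite /= ff ccompA.
  + by split=> // [[|k]] // _ X h f0h; apply: f0_inj; rewrite f0h comp0r.
Qed.

Lemma regular_of_resolution0 : has_resolution M 0 -> exists g, ccomp f (ccomp g f) = f.
Proof.
rewrite has_rep_resolutionP // => -[B [_ [b [b_gen /(_ erefl) b_mono _ _]]]].
have [a ab] : exists a : cHom A0 (B 0%N), mmap a b = e by apply/b_gen.
have [c ce] : exists c : cHom (B 0%N) A0, mmap c e = b by apply/fe.1.
have ac : ccomp a c = idm _.
  by apply/eqP; rewrite -subr_eq0; apply/eqP/b_mono; rewrite /elem_ker mmapBf mmapM ab ce mmap1 subrr.
have [h fh] : exists h, ccomp f h = idm A0 - ccomp c a.
  by apply/fe.2; rewrite /elem_ker mmapBf mmapM ce ab mmap1 subrr.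
have af : ccomp a f = 0.
  by apply: b_mono; rewrite /elem_ker mmapM ab; apply/fe.2; exists (idm _); rewrite mmap1.
by exists h; rewrite ccompA fh compBl comp1l -ccompA af comp0r subr0.
Qed.

Lemma resolution0_of_cokernel :
  (exists (Am1 : Obj C) (f0 : cHom A0 Am1), cexact f f0 /\ csurj f0) -> has_resolution M 0.
Proof.
case=> Am1 [f0 [[f0f f0_ker] f0_surj]]; have [s f0s] := f0_surj Am1 (idm Am1).
rewrite has_rep_resolutionP //.
exists (fun _ => Am1), (fun _ => 0), (mmap s e); split=> //.
- move=> X y; split=> // _; have [x <-] := (fe.1 X y).1 I.
  exists (ccomp f0 x); rewrite -mmapM; apply/eqP; rewrite -subr_eq0 -mmapBf; apply/eqP/fe.2.
  by apply: f0_ker; rewrite compBr !ccompA f0s comp1l subrr.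
- move=> _ X x; rewrite /elem_ker -mmapM => /fe.2 [z fz].
  by rewrite -[x]comp1l -f0s -ccompA -fz ccompA f0f comp0l.
Qed.

Lemma has_resolution0_regularP : has_resolution M 0 <-> exists g, ccomp f (ccomp g f) = f.
Proof.
split=> [|[g /(cokernel_of_regular HC)]]; first exact: regular_of_resolution0.
exact: resolution0_of_cokernel.
Qed.

Lemma has_resolution0_cokernelP :
  has_resolution M 0 <-> exists (Am1 : Obj C) (f0 : cHom A0 Am1), cexact f f0 /\ csurj f0.
Proof.
split=> [/regular_of_resolution0 [g /(cokernel_of_regular HC)] //|].
exact: resolution0_of_cokernel.
Qed.

Lemma has_some_resolution_chainP :
  (exists n, has_resolution M n) <->
  exists (n : nat) (Y : nat -> Obj C)
         (d : forall i, cHom (ext_obj A0 A1 Y i.+1) (ext_obj A0 A1 Y i)),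
    [/\ (1 <= n)%N, d 0%N = f & chain_exact d n].
Proof.
split=> [[n] | [n [Y [d [n_gt0 d0 d_exact]]]]]; rewrite ?has_rep_resolutionP //.
- move=> res; have [k /rep_resolution_chainP [Y [d [d0 d_exact]]]] :
      exists k, rep_resolution full k.+2.
    case: n res => [|[|k]] res; last by exists k.
    + by exists 0%N; apply/rep_resolution2_of1/rep_resolution1_of0.
    + by exists 0%N; apply/rep_resolution2_of1.
  by exists k.+2, Y, d.
- by exists n; rewrite has_rep_resolutionP //; apply: rep_resolution_of_chain fe d0 n_gt0 d_exact.
Qed.
End Presentation.

Unset Implicit Arguments.

Theorem mainTheorem12 (C : AddCat) (HC : idem_complete C) :
  (* (1) *)
  (forall l : nat, (2 <= l)%N ->
     (unif_reg_coherent C l <->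
      forall (A1 A0 : Obj C) (f1 : cHom A1 A0),
        exists (Y : nat -> Obj C)
               (d : forall i, cHom (ext_obj A0 A1 Y i.+1) (ext_obj A0 A1 Y i)),
          d 0%N = f1 /\ chain_exact d l))
  /\
  (* (2) *)
  (unif_reg_coherent C 1 <->
   forall (A1 A0 : Obj C) (f : cHom A1 A0),
     exists (B : Obj C) (f1 : cHom A1 B) (f0 : cHom B A0),
       [/\ f = ccomp f0 f1, csurj f1 & cinj f0])
  /\
  (* (3) (a) <-> (b) and (a) <-> (c) *)
  ((unif_reg_coherent C 0 <->
    forall (A1 A0 : Obj C) (f1 : cHom A1 A0),
      exists (Am1 : Obj C) (f0 : cHom A0 Am1), cexact f1 f0 /\ csurj f0)
   /\
   (unif_reg_coherent C 0 <->
    forall (A1 A0 : Obj C) (f : cHom A1 A0),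
      exists g : cHom A0 A1, ccomp f (ccomp g f) = f))
  /\
  (* (4) *)
  (reg_coherent C <->
   forall (A1 A0 : Obj C) (f1 : cHom A1 A0),
     exists (n : nat) (Y : nat -> Obj C)
            (d : forall i, cHom (ext_obj A0 A1 Y i.+1) (ext_obj A0 A1 Y i)),
       [/\ (1 <= n)%N, d 0%N = f1 & chain_exact d n]).
Proof.
have reduce := fin_pres_forallP (C := C).
split; [|split; [|split; [split|]]].
- move=> l l2; apply: reduce => M A1 A0 f e fe.
  exact (has_resolution_chainP HC fe l2).
- apply: reduce => M A1 A0 f e fe; exact (has_resolution1_factorP HC fe).
- apply: reduce => M A1 A0 f e fe; exact (has_resolution0_cokernelP HC fe).
- apply: reduce => M A1 A0 f e fe; exact (has_resolution0_regularP HC fe).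
- apply: reduce => M A1 A0 f e fe; exact (has_some_resolution_chainP HC fe).
Qed.
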